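(* Let $Q$ be a Foulis quantale. Then the complete orthomodular lattice $[Q]=\{[t]\mid t\in Q\}$ is a left $Q$-module with action $u\bullet k=(u\cdot k)^{\perp\perp}$ for $u\in Q$, $k\in[Q]$, and it is also a right $\mathbf 2$-module.
   Context: A quantale is a complete lattice $Q$ (join $\bigsqcup$) with associative multiplication distributing over arbitrary joins on both sides; unital if it has a two-sided unit $e$; involutive if it has a join-preserving semigroup involution $*$. A Foulis quantale is a unital involutive quantale $Q$ with an endomap $[-]\colon Q\to Q$ such that: (a) $[s]\cdot[s]=[s]=[s]^*$; (b) $[e]=0$; (c) $s\cdot x=0$ iff $x=[s]\cdot y$ for some $y\in Q$. For $t\in Q$ put $t^\perp=[t^*]$. The set $[Q]$ is a complete orthomodular lattice with order $k_1\le k_2$ iff $k_1=k_2\cdot k_1$, top $[0]$, orthocomplement $k^\perp=[k]$, and joins $\bigvee S=[[\bigsqcup S]]$. A left $Q$-module is a complete lattice $A$ with $\bullet\colon Q\times A\to A$ such that $s\bullet\bigvee B=\bigvee_{x\in B}s\bullet x$, $(\bigsqcup T)\bullet a=\bigvee_{t\in T}t\bullet a$, $u\bullet(v\bullet a)=(u\cdot v)\bullet a$, $e\bullet a=a$. $\mathbf 2$ is the two-element chain with meet as multiplication and identity involution; a complete lattice $A$ is a right $\mathbf 2$-module via $a\bullet1=a$, $a\bullet0=0$. *)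

From Stdlib Require Import ClassicalEpsilon.

Set Implicit Arguments.

Definition img (X Y : Type) (f : X -> Y) (S : X -> Prop) : Y -> Prop :=
  fun y => exists x, S x /\ y = f x.

Definition subset (X : Type) (S A : X -> Prop) : Prop := forall x, S x -> A x.

Definition is_complete_lattice_on (X : Type) (A : X -> Prop)
    (le : X -> X -> Prop) (join : (X -> Prop) -> X) : Prop :=
  (forall a, A a -> le a a) /\
  (forall a b, A a -> A b -> le a b -> le b a -> a = b) /\
  (forall a b c, A a -> A b -> A c -> le a b -> le b c -> le a c) /\
  (forall S, subset S A -> A (join S)) /\
  (forall S, subset S A -> forall x, S x -> le x (join S)) /\
  (forall S, subset S A -> forall y, A y ->
       (forall x, S x -> le x y) -> le (join S) y).

Definition is_complete_lattice (X : Type) (le : X -> X -> Prop)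
    (sup : (X -> Prop) -> X) : Prop :=
  is_complete_lattice_on (fun _ => True) le sup.

Definition is_quantale (Q : Type) (le : Q -> Q -> Prop)
    (sup : (Q -> Prop) -> Q) (mul : Q -> Q -> Q) : Prop :=
  is_complete_lattice le sup /\
  (forall a b c, mul a (mul b c) = mul (mul a b) c) /\
  (forall s T, mul s (sup T) = sup (img (mul s) T)) /\
  (forall T s, mul (sup T) s = sup (img (fun t => mul t s) T)).

Definition is_unital_quantale (Q : Type) (le : Q -> Q -> Prop)
    (sup : (Q -> Prop) -> Q) (mul : Q -> Q -> Q) (e : Q) : Prop :=
  is_quantale le sup mul /\ (forall a, mul e a = a) /\ (forall a, mul a e = a).

Definition is_involutive_quantale (Q : Type) (le : Q -> Q -> Prop)
    (sup : (Q -> Prop) -> Q) (mul : Q -> Q -> Q) (star : Q -> Q) : Prop :=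
  is_quantale le sup mul /\
  (forall a, star (star a) = a) /\
  (forall a b, star (mul a b) = mul (star b) (star a)) /\
  (forall S, star (sup S) = sup (img star S)).

Definition qzero (Q : Type) (sup : (Q -> Prop) -> Q) : Q := sup (fun _ => False).

Definition is_Foulis_quantale (Q : Type) (le : Q -> Q -> Prop)
    (sup : (Q -> Prop) -> Q) (mul : Q -> Q -> Q) (e : Q) (star : Q -> Q)
    (br : Q -> Q) : Prop :=
  is_unital_quantale le sup mul e /\
  is_involutive_quantale le sup mul star /\
  (forall s, mul (br s) (br s) = br s /\ star (br s) = br s) /\
  br e = qzero sup /\
  (forall s x, mul s x = qzero sup <-> exists y, x = mul (br s) y). (* (c) *)

Definition is_left_module (Q : Type) (qsup : (Q -> Prop) -> Q)
    (qmul : Q -> Q -> Q) (qe : Q)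
    (X : Type) (A : X -> Prop) (le : X -> X -> Prop) (join : (X -> Prop) -> X)
    (act : Q -> X -> X) : Prop :=
  is_complete_lattice_on A le join /\
  (forall s a, A a -> A (act s a)) /\
  (forall s B, subset B A -> act s (join B) = join (img (act s) B)) /\
  (forall T a, A a -> act (qsup T) a = join (img (fun t => act t a) T)) /\
  (forall u v a, A a -> act u (act v a) = act (qmul u v) a) /\
  (forall a, A a -> act qe a = a).

Definition is_right_module (Q : Type) (qsup : (Q -> Prop) -> Q)
    (qmul : Q -> Q -> Q) (qe : Q)
    (X : Type) (A : X -> Prop) (le : X -> X -> Prop) (join : (X -> Prop) -> X)
    (act : X -> Q -> X) : Prop :=
  is_complete_lattice_on A le join /\
  (forall a s, A a -> A (act a s)) /\
  (forall B s, subset B A -> act (join B) s = join (img (fun b => act b s) B)) /\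
  (forall a T, A a -> act a (qsup T) = join (img (act a) T)) /\
  (forall a u v, A a -> act (act a u) v = act a (qmul u v)) /\
  (forall a, A a -> act a qe = a).

Definition two_sup (T : bool -> Prop) : bool :=
  if excluded_middle_informative (T true) then true else false.
Definition two_mul : bool -> bool -> bool := andb.
Definition two_e : bool := true.

Definition two_act (X : Type) (join : (X -> Prop) -> X) (a : X) (b : bool) : X :=
  if b then a else join (fun _ => False).

Section BracketLattice.
Variables (Q : Type) (sup : (Q -> Prop) -> Q) (mul : Q -> Q -> Q)
          (star : Q -> Q) (br : Q -> Q).
Definition perp (t : Q) : Q := br (star t).
Definition inBr (k : Q) : Prop := exists t, k = br t.
Definition brle (k1 k2 : Q) : Prop := k1 = mul k2 k1.
Definition brjoin (S : Q -> Prop) : Q := br (br (sup S)).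
Definition bract (u k : Q) : Q := perp (perp (mul u k)).
End BracketLattice.

(* For x in Q and p in [Q] one has [[x]] <= p iff x * [p] = 0.  Together with
   [[[t]]] = [t] (a consequence of (c) and the involution), this lets every
   comparison in [Q] be tested by annihilation in Q.  Since "x * q = 0" is
   stable under joins in x, each module law for u . k = [[k u*]] then reduces
   to associativity and distributivity of the multiplication of Q.  The right
   2-module structure exists on any complete lattice. *)

From Pilot Require Import Defs.
From Stdlib Require Import ClassicalEpsilon.

Set Implicit Arguments.

Section CompleteLattice.

Variables (X : Type) (A : X -> Prop) (le : X -> X -> Prop)
          (join : (X -> Prop) -> X).
Hypothesis HL : is_complete_lattice_on A le join.

Local Notation bot := (join (fun _ => False)).

Lemma lattice_refl a : A a -> le a a.
Proof. apply HL. Qed.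

Lemma lattice_antisym a b : A a -> A b -> le a b -> le b a -> a = b.
Proof. apply HL. Qed.

Lemma lattice_join_mem S : subset S A -> A (join S).
Proof. apply HL. Qed.

Lemma join_le_iff S p :
  subset S A -> A p -> (le (join S) p <-> forall x, S x -> le x p).
Proof.
  destruct HL as (_ & _ & Htrans & Hmem & Hub & Hlub).
  intros HS Hp; split.
  - intros H x Hx. apply Htrans with (join S); auto.
  - intro H. apply Hlub; auto.
Qed.

Lemma le_ext a b :
  A a -> A b -> (forall p, A p -> (le a p <-> le b p)) -> a = b.
Proof.
  intros Ha Hb H. apply lattice_antisym; auto.
  - apply (H b Hb), lattice_refl; auto.
  - apply (H a Ha), lattice_refl; auto.
Qed.

Lemma join_ext S S' : subset S A -> (forall x, S x <-> S' x) -> join S = join S'.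
Proof.
  intros HS HSS'.
  assert (HS' : subset S' A) by (intros x Hx; apply HS, HSS', Hx).
  apply le_ext; try apply lattice_join_mem; auto.
  intros p Hp. rewrite !join_le_iff by auto.
  split; intros H x Hx; apply H, HSS', Hx.
Qed.

Lemma bot_mem : A bot.
Proof. apply lattice_join_mem. intros x []. Qed.

Lemma bot_le p : A p -> le bot p.
Proof. intro Hp. apply join_le_iff; auto; intros x []. Qed.

Lemma join_eq_bot S : subset S A -> (join S = bot <-> forall x, S x -> x = bot).
Proof.
  intro HS; split.
  - intros H x Hx. apply lattice_antisym; auto using bot_mem.
    + rewrite <- H. apply HL; auto.
    + apply bot_le; auto.
  - intro H. apply lattice_antisym; auto using lattice_join_mem, bot_mem.
    + apply join_le_iff; auto using bot_mem.
      intros x Hx. rewrite (H x Hx). apply lattice_refl, bot_mem.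
    + apply bot_le, lattice_join_mem; auto.
Qed.

Theorem two_right_module :
  is_right_module two_sup two_mul two_e A le join (two_act join).
Proof.
  assert (Hact : forall a b, A a -> A (two_act join a b))
    by (intros a [|] Ha; [exact Ha | exact bot_mem]).
  assert (Himg : forall a T, A a -> subset (img (two_act join a) T) A)
    by (intros a T Ha y [b [_ ->]]; auto).
  split; [exact HL |]. split; [intros; apply Hact; auto |]. split.
  { intros B [|] HB; simpl.
    - apply join_ext; auto.
      intro x; split; [intro Hx; exists x; auto | intros [y [Hy ->]]; auto].
    - symmetry. apply join_eq_bot; [intros y [b [_ ->]]; exact bot_mem |].
      intros y [b [_ ->]]; reflexivity. }
  split.
  { intros a T Ha. unfold two_sup.
    destruct (excluded_middle_informative (T true)) as [Ht | Ht]; simpl.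
    - apply le_ext; auto using lattice_join_mem.
      intros p Hp. rewrite join_le_iff by auto. split.
      + intros H y [[|] [_ ->]]; simpl; auto using bot_le.
      + intro H. apply H. exists true; auto.
    - symmetry. apply join_eq_bot; auto.
      intros y [[|] [Hb ->]]; [contradiction | reflexivity]. }
  split; [intros a [|] [|] Ha; reflexivity | reflexivity].
Qed.

End CompleteLattice.

Section FoulisQuantale.

Variables (Q : Type) (le : Q -> Q -> Prop) (sup : (Q -> Prop) -> Q)
          (mul : Q -> Q -> Q) (e : Q) (star : Q -> Q) (br : Q -> Q).
Hypothesis HF : is_Foulis_quantale le sup mul e star br.

Local Notation zero := (qzero sup).
Local Notation inB := (inBr br).
Local Notation brle := (brle mul).
Local Notation brjoin := (brjoin sup br).
Local Notation bract := (bract mul star br).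

Lemma Q_complete_lattice : is_complete_lattice le sup.
Proof. destruct HF as [[[H _] _] _]; exact H. Qed.

Lemma mulA a b c : mul a (mul b c) = mul (mul a b) c.
Proof. destruct HF as [[[_ [H _]] _] _]; apply H. Qed.

Lemma mul_supr s T : mul s (sup T) = sup (img (mul s) T).
Proof. destruct HF as [[[_ [_ [H _]]] _] _]; apply H. Qed.

Lemma mul_supl T s : mul (sup T) s = sup (img (fun t => mul t s) T).
Proof. destruct HF as [[[_ [_ [_ H]]] _] _]; apply H. Qed.

Lemma mul1q a : mul e a = a.
Proof. destruct HF as [[_ [H _]] _]; apply H. Qed.

Lemma mulq1 a : mul a e = a.
Proof. destruct HF as [[_ [_ H]] _]; apply H. Qed.

Lemma starK a : star (star a) = a.
Proof. destruct HF as [_ [[_ [H _]] _]]; apply H. Qed.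

Lemma star_mul a b : star (mul a b) = mul (star b) (star a).
Proof. destruct HF as [_ [[_ [_ [H _]]] _]]; apply H. Qed.

Lemma star_sup S : star (sup S) = sup (img star S).
Proof. destruct HF as [_ [[_ [_ [_ H]]] _]]; apply H. Qed.

Lemma br_idem s : mul (br s) (br s) = br s.
Proof. destruct HF as [_ [_ [H _]]]; apply H. Qed.

Lemma star_br s : star (br s) = br s.
Proof. destruct HF as [_ [_ [H _]]]; apply H. Qed.

Lemma mul_eq0_iff s x : mul s x = zero <-> exists y, x = mul (br s) y.
Proof. destruct HF as [_ [_ [_ [_ H]]]]; apply H. Qed.

Lemma sup_eq0 S : sup S = zero <-> forall x, S x -> x = zero.
Proof. apply (join_eq_bot Q_complete_lattice). intros x _; exact I. Qed.

Lemma sup_img_empty (f : Q -> Q) : sup (img f (fun _ => False)) = zero.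
Proof. apply sup_eq0. intros x [y [[] _]]. Qed.

Lemma mulq0 x : mul x zero = zero.
Proof. unfold qzero at 1. rewrite mul_supr. apply sup_img_empty. Qed.

Lemma mul0q x : mul zero x = zero.
Proof. unfold qzero at 1. rewrite mul_supl. apply sup_img_empty. Qed.

Lemma star0 : star zero = zero.
Proof. unfold qzero at 1. rewrite star_sup. apply sup_img_empty. Qed.

Lemma star_e : star e = e.
Proof.
  assert (H : star (star e) = star (mul e (star e))) by now rewrite mul1q.
  now rewrite star_mul, !starK, mul1q in H.
Qed.

Lemma mul_br s : mul s (br s) = zero.
Proof. apply mul_eq0_iff. exists e. now rewrite mulq1. Qed.

(* The left annihilator of [s] is [Q [s*]], by applying [*] to (c). *)
Lemma mul_eq0_factor_r x s : mul x s = zero -> exists y, x = mul y (br (star s)).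
Proof.
  intro H.
  assert (H0 : mul (star s) (star x) = zero) by now rewrite <- star_mul, H, star0.
  destruct (proj1 (mul_eq0_iff _ _) H0) as [y Hy]. exists (star y).
  now rewrite <- (starK x), Hy, star_mul, star_br.
Qed.

Lemma br_mul_fix_l s x : (exists y, x = mul (br s) y) -> mul (br s) x = x.
Proof. intros [y ->]. now rewrite mulA, br_idem. Qed.

Lemma br_mul_fix_r s x : (exists y, x = mul y (br s)) -> mul x (br s) = x.
Proof. intros [y ->]. now rewrite <- mulA, br_idem. Qed.

Lemma mul_brbr_br t : mul (br (br t)) (br t) = zero.
Proof. now rewrite <- star0, <- (mul_br (br t)), star_mul, !star_br. Qed.

Lemma mul_brbr_fix s : mul s (br (br s)) = s.
Proof.
  apply br_mul_fix_r. destruct (mul_eq0_factor_r (mul_br s)) as [y Hy].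
  rewrite star_br in Hy. eauto.
Qed.

Lemma br3 t : br (br (br t)) = br t.
Proof.
  assert (H1 : mul (br (br (br t))) (br t) = br t)
    by (apply br_mul_fix_l, mul_eq0_iff, mul_brbr_br).
  assert (H2 : mul (br t) (br (br (br t))) = br (br (br t))).
  { apply br_mul_fix_l, mul_eq0_iff.
    rewrite <- (mul_brbr_fix t) at 1. now rewrite <- mulA, mul_br, mulq0. }
  rewrite <- (star_br (br (br t))), <- H2, star_mul, !star_br. exact H1.
Qed.

Lemma inBr_br t : inB (br t).
Proof. exists t; reflexivity. Qed.

Lemma inBr_brK p : inB p -> br (br p) = p.
Proof. intros [t ->]. apply br3. Qed.

Lemma inBr_star p : inB p -> star p = p.
Proof. intros [t ->]. apply star_br. Qed.

Lemma selfadjoint_mul_fix_iff a p :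
  star a = a -> star p = p -> (mul p a = a <-> mul a p = a).
Proof. intros Ha Hp; split; intro H; rewrite <- Ha, <- Hp, <- star_mul, H; reflexivity. Qed.

Lemma brle_brbr_iff x p : inB p -> (brle (br (br x)) p <-> mul x (br p) = zero).
Proof.
  intros [t ->]. unfold Defs.brle. split.
  - intro H. symmetry in H.
    apply selfadjoint_mul_fix_iff in H; try apply star_br.
    rewrite <- (mul_brbr_fix x), <- mulA, <- H, <- mulA, mul_br.
    now rewrite !mulq0.
  - intro H.
    assert (H1 : mul (br x) (br (br t)) = br (br t))
      by (apply br_mul_fix_l, mul_eq0_iff, H).
    assert (H2 : mul (br (br x)) (br (br t)) = zero)
      by now rewrite <- H1, mulA, mul_brbr_br, mul0q.
    destruct (mul_eq0_factor_r H2) as [y Hy]. rewrite star_br, br3 in Hy.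
    symmetry. apply selfadjoint_mul_fix_iff; try apply star_br.
    apply br_mul_fix_r. eauto.
Qed.

Lemma mul_sup_eq0 S q : mul (sup S) q = zero <-> forall x, S x -> mul x q = zero.
Proof.
  rewrite mul_supl, sup_eq0. split.
  - intros H x Hx. apply H. exists x; auto.
  - intros H y [x [Hx ->]]. auto.
Qed.

Lemma mul_brbr_eq0 s q : mul (br (br s)) q = zero <-> mul s q = zero.
Proof. now rewrite mul_eq0_iff, br3, <- mul_eq0_iff. Qed.

Lemma brle_join S p :
  subset S inB -> inB p -> (brle (brjoin S) p <-> forall x, S x -> brle x p).
Proof.
  intros HS Hp. unfold Defs.brjoin. rewrite (brle_brbr_iff _ Hp), mul_sup_eq0.
  split; intros H x Hx.
  - rewrite <- (inBr_brK (HS x Hx)). apply brle_brbr_iff; auto.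
  - apply (brle_brbr_iff _ Hp). rewrite inBr_brK; auto.
Qed.

Lemma brle_refl a : inB a -> brle a a.
Proof. intros [t ->]. unfold Defs.brle. now rewrite br_idem. Qed.

Lemma brle_antisym a b : inB a -> inB b -> brle a b -> brle b a -> a = b.
Proof.
  unfold Defs.brle. intros Ha Hb Hab Hba.
  rewrite Hba. symmetry. apply selfadjoint_mul_fix_iff; auto using inBr_star.
Qed.

Lemma brle_trans a b c : brle a b -> brle b c -> brle a c.
Proof.
  unfold Defs.brle. intros Hab Hbc.
  now rewrite Hab at 2; rewrite mulA, <- Hbc, <- Hab.
Qed.

Theorem bracket_complete_lattice : is_complete_lattice_on inB brle brjoin.
Proof.
  split; [exact brle_refl |]. split; [exact brle_antisym |].
  split; [intros a b c _ _ _; apply brle_trans |].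
  split; [intros; apply inBr_br |]. split.
  - intros S HS x Hx. apply (brle_join HS (inBr_br _)); auto using brle_refl, inBr_br.
  - intros S HS y Hy H. apply brle_join; auto.
Qed.

Lemma bract_eq u k : inB k -> bract u k = br (br (mul k (star u))).
Proof. intro Hk. unfold Defs.bract, perp. now rewrite star_br, star_mul, inBr_star. Qed.

Lemma inBr_bract u k : inB (bract u k).
Proof. apply inBr_br. Qed.

Lemma bract_le u k p :
  inB k -> inB p -> (brle (bract u k) p <-> mul (mul k (star u)) (br p) = zero).
Proof. intros Hk Hp. rewrite bract_eq by exact Hk. apply brle_brbr_iff, Hp. Qed.

Lemma bract_join u B :
  subset B inB -> bract u (brjoin B) = brjoin (img (bract u) B).
Proof.
  intro HB. apply (le_ext bracket_complete_lattice); try apply inBr_br.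
  intros p Hp. unfold Defs.brjoin at 1.
  rewrite (bract_le u (inBr_br _) Hp), (join_le_iff bracket_complete_lattice);
    [| intros y [b [_ ->]]; apply inBr_bract | exact Hp].
  rewrite <- mulA, mul_brbr_eq0, mul_sup_eq0. split.
  - intros H y [b [Hb ->]]. apply (bract_le u (HB b Hb) Hp). rewrite <- mulA; auto.
  - intros H b Hb. rewrite mulA. apply (bract_le u (HB b Hb) Hp), H. exists b; auto.
Qed.

Lemma bract_sup T a :
  inB a -> bract (sup T) a = brjoin (img (fun t => bract t a) T).
Proof.
  intro Ha. apply (le_ext bracket_complete_lattice); try apply inBr_br.
  intros p Hp.
  rewrite (bract_le _ Ha Hp), (join_le_iff bracket_complete_lattice);
    [| intros y [t [_ ->]]; apply inBr_bract | exact Hp].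
  rewrite star_sup, mul_supr, mul_sup_eq0. split.
  - intros H y [t [Ht ->]]. apply (bract_le t Ha Hp), H.
    exists (star t); split; [exists t; auto | reflexivity].
  - intros H y [x [[t [Ht ->]] ->]]. apply (bract_le t Ha Hp), H. exists t; auto.
Qed.

Lemma bract_mul u v a : inB a -> bract u (bract v a) = bract (mul u v) a.
Proof.
  intro Ha. apply (le_ext bracket_complete_lattice); try apply inBr_br.
  intros p Hp.
  rewrite (bract_le u (inBr_bract v a) Hp), (bract_le _ Ha Hp), (bract_eq v Ha).
  now rewrite <- mulA, mul_brbr_eq0, star_mul, !mulA.
Qed.

Lemma bract_e a : inB a -> bract e a = a.
Proof. intro Ha. rewrite bract_eq, star_e, mulq1 by exact Ha. apply inBr_brK, Ha. Qed.

Theorem bracket_left_module : is_left_module sup mul e inB brle brjoin bract.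
Proof.
  split; [exact bracket_complete_lattice |].
  split; [intros; apply inBr_bract |].
  split; [exact bract_join |]. split; [exact bract_sup |].
  split; [exact bract_mul | exact bract_e].
Qed.

End FoulisQuantale.

Theorem mainTheorem7 (Q : Type) (le : Q -> Q -> Prop)
    (sup : (Q -> Prop) -> Q) (mul : Q -> Q -> Q) (e : Q) (star : Q -> Q)
    (br : Q -> Q) :
  is_Foulis_quantale le sup mul e star br ->
  is_left_module sup mul e (inBr br) (brle mul) (brjoin sup br)
    (bract mul star br) /\
  is_right_module two_sup two_mul two_e (inBr br) (brle mul) (brjoin sup br)
    (two_act (brjoin sup br)).
Proof.
  intro HF. split.
  - exact (bracket_left_module HF).
  - exact (two_right_module (bracket_complete_lattice HF)).
Qed.
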